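(* Let $\mathcal S,\mathcal P\subseteq\mathcal G$ be group properties with $\mathcal P\subseteq\mathcal S$. If for every $G\in\mathcal S$ there is some $H\in\mathcal P$ such that $\overline G$ can be embedded into $\overline H$, then $\mathcal P$ is dense in $\mathcal S$.
   Context: Let $\mathbb N=\{1,2,3,\dots\}$. Equip $\mathbb N^{\mathbb N\times\mathbb N}$ with the product topology of the discrete topology on $\mathbb N$. Let $\mathcal G$ be the subspace consisting of those $A\in\mathbb N^{\mathbb N\times\mathbb N}$ that are the multiplication table of a group on the underlying set $\mathbb N$ whose identity element is $1$. For $G\in\mathcal G$, $\overline G$ denotes the group on $\mathbb N$ with multiplication table $G$. A group property is a subset $\mathcal P\subseteq\mathcal G$ invariant under isomorphism: if $G\in\mathcal G$, $H\in\mathcal P$ and $\overline G\cong\overline H$ then $G\in\mathcal P$. *)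

(* N = {1,2,3,...} is represented by Rocq's [positive],
   whose least element is 1%positive. *)
From Stdlib Require Import PArith List.
Import ListNotations.

(* Points of N^(N x N): (curried) functions N -> N -> N. *)
Definition table := positive -> positive -> positive.

Definition is_group_table (A : table) : Prop :=
  (forall x y z, A (A x y) z = A x (A y z)) /\
  (forall x, A 1%positive x = x /\ A x 1%positive = x) /\
  (forall x, exists y, A x y = 1%positive /\ A y x = 1%positive).

Definition G_space : table -> Prop := is_group_table.

Definition is_hom (A B : table) (f : positive -> positive) : Prop :=
  forall x y, f (A x y) = B (f x) (f y).

Definition group_iso (A B : table) : Prop :=
  exists f : positive -> positive,
    is_hom A B f /\ (forall x y, f x = f y -> x = y) /\ (forall y, exists x, f x = y).

Definition group_embeds (A B : table) : Prop :=
  exists f : positive -> positive,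
    is_hom A B f /\ (forall x y, f x = f y -> x = y).

Definition group_property (P : table -> Prop) : Prop :=
  (forall A, P A -> G_space A) /\
  (forall A B, G_space A -> P B -> group_iso A B -> P A).

(* Basic open neighbourhoods of A in the product of discrete topologies:
   the tables agreeing with A on a finite set F of coordinates. *)
Definition agree_on (F : list (positive * positive)) (A B : table) : Prop :=
  forall p, In p F -> B (fst p) (snd p) = A (fst p) (snd p).

(* P is dense in S: every point of S lies in the closure of P, i.e. every
   basic open neighbourhood of a point of S meets P. *)
Definition dense_in (P S : table -> Prop) : Prop :=
  forall A, S A -> forall F : list (positive * positive),
    exists B, P B /\ agree_on F A B.

(** Let [G] be in [S], let [F] be a finite set of coordinates, and let [f]
    embed [G] into some [H] in [P].  Only finitely many elements of [N] occur
    in [F] (as arguments or as values of [G]); together with [1] they form a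
    finite set [X].  Since [f] is injective, some permutation [pi] of [N]
    sends [f x] back to [x] for every [x] in [X].  Relabelling [H] along [pi]
    gives a group table isomorphic to [H], hence in [P], with identity
    [pi 1 = 1]; as [f] is a homomorphism, it agrees with [G] on [F]. *)

From Stdlib Require Import PArith List.
Import ListNotations.

Definition transpose (a b u : positive) : positive :=
  if Pos.eq_dec u a then b else if Pos.eq_dec u b then a else u.

Lemma transpose_involutive a b u : transpose a b (transpose a b u) = u.
Proof.
  unfold transpose; repeat (destruct Pos.eq_dec; subst; try congruence).
Qed.

Lemma perm_inverting_injection_on (f : positive -> positive)
  (f_inj : forall x y, f x = f y -> x = y) (X : list positive) :
  exists pi rho : positive -> positive,
    (forall u, rho (pi u) = u) /\ (forall u, pi (rho u) = u) /\
    (forall x, In x X -> pi (f x) = x).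
Proof.
  induction X as [|x X IH].
  - exists (fun u => u), (fun u => u); simpl; tauto.
  - destruct IH as (pi & rho & rho_pi & pi_rho & pi_f).
    destruct (in_dec Pos.eq_dec x X) as [xX | xX].
    + exists pi, rho; repeat split; auto.
      intros y [<- | yX]; auto.
    + set (c := pi (f x)).
      assert (y_neq_c : forall y, In y X -> y <> c).
      { intros y yX e; unfold c in e; rewrite <- (pi_f y yX) in e.
        apply (f_equal rho) in e; rewrite !rho_pi in e.
        apply f_inj in e; subst; contradiction. }
      exists (fun u => transpose c x (pi u)), (fun u => rho (transpose c x u)).
      repeat split.
      * intro u; rewrite transpose_involutive; auto.
      * intro u; rewrite pi_rho, transpose_involutive; auto.
      * intros y [<- | yX]; unfold transpose.
        -- fold c; destruct Pos.eq_dec; congruence.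
        -- rewrite (pi_f y yX).
           destruct (Pos.eq_dec y c) as [e | _]; [now destruct (y_neq_c y yX e)|].
           destruct (Pos.eq_dec y x); [subst; contradiction | auto].
Qed.

Lemma hom_one (A B : table) (f : positive -> positive) :
  is_group_table A -> is_group_table B -> is_hom A B f -> f 1%positive = 1%positive.
Proof.
  intros (_ & A_id & _) (B_assoc & B_id & B_inv) f_hom.
  assert (idem : B (f 1%positive) (f 1%positive) = f 1%positive).
  { rewrite <- f_hom; f_equal; apply A_id. }
  destruct (B_inv (f 1%positive)) as (w & _ & w_f1).
  transitivity (B (B w (f 1%positive)) (f 1%positive)).
  - rewrite w_f1; symmetry; apply B_id.
  - rewrite B_assoc, idem; exact w_f1.
Qed.

Section Relabelling.

Variables pi rho : positive -> positive.
Hypothesis rho_pi : forall u, rho (pi u) = u.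
Hypothesis pi_rho : forall u, pi (rho u) = u.

Definition relabel (H : table) : table := fun u v => pi (H (rho u) (rho v)).

Lemma relabel_iso (H : table) : group_iso (relabel H) H.
Proof.
  exists rho; repeat split.
  - intros x y; unfold relabel; apply rho_pi.
  - intros x y e; rewrite <- (pi_rho x), <- (pi_rho y), e; reflexivity.
  - intro y; exists (pi y); apply rho_pi.
Qed.

Lemma relabel_group_table (H : table) :
  pi 1%positive = 1%positive -> is_group_table H -> is_group_table (relabel H).
Proof.
  intros pi1 (H_assoc & H_id & H_inv).
  assert (rho1 : rho 1%positive = 1%positive) by (rewrite <- pi1 at 1; apply rho_pi).
  unfold relabel; repeat split.
  - intros x y z; rewrite !rho_pi, H_assoc; reflexivity.
  - rewrite rho1, (proj1 (H_id _)); apply pi_rho.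
  - rewrite rho1, (proj2 (H_id _)); apply pi_rho.
  - intro x; destruct (H_inv (rho x)) as (y & xy & yx).
    exists (pi y); rewrite rho_pi, xy, yx, pi1; split; reflexivity.
Qed.

Lemma relabel_hom_image (A H : table) (f : positive -> positive) x y :
  is_hom A H f ->
  pi (f x) = x -> pi (f y) = y -> pi (f (A x y)) = A x y ->
  relabel H x y = A x y.
Proof.
  intros f_hom fx fy fxy; unfold relabel.
  rewrite <- fx, <- fy, !rho_pi, <- f_hom, fx, fy; exact fxy.
Qed.

End Relabelling.

Definition entries (A : table) (F : list (positive * positive)) : list positive :=
  flat_map (fun p => [fst p; snd p; A (fst p) (snd p)]) F.

Theorem lemma4p3 (S P : table -> Prop) :
  group_property S -> group_property P ->
  (forall A, P A -> S A) ->
  (forall G, S G -> exists H, P H /\ group_embeds G H) ->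
  dense_in P S.
Proof.
  intros [S_groups _] [P_groups P_iso] _ embeds A SA F.
  destruct (embeds A SA) as (H & PH & f & f_hom & f_inj).
  assert (f1 : f 1%positive = 1%positive)
    by exact (hom_one A H f (S_groups A SA) (P_groups H PH) f_hom).
  destruct (perm_inverting_injection_on f f_inj (1%positive :: entries A F))
    as (pi & rho & rho_pi & pi_rho & pi_f).
  assert (pi1 : pi 1%positive = 1%positive)
    by (rewrite <- f1 at 1; apply pi_f; left; reflexivity).
  exists (relabel pi rho H); split.
  - apply (P_iso _ H); auto.
    + exact (relabel_group_table pi rho rho_pi pi_rho H pi1 (P_groups H PH)).
    + exact (relabel_iso pi rho rho_pi pi_rho H).
  - intros [x y] xyF; simpl.
    apply (relabel_hom_image pi rho rho_pi A H f x y f_hom);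
      apply pi_f; right; apply in_flat_map; exists (x, y); simpl; auto.
Qed.
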